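(* Let $(X,\mu)$ be a measure space and $\mathcal{E}$ a finite collection of measurable sets with $0<\mu(R)<\infty$ for all $R\in\mathcal{E}$. For each $f\in L^1(X)$ there exists a sparse subfamily $\mathcal{S}\subseteq\mathcal{E}$ such that $$\mathcal{M}_\mathcal{E}f\le\mathcal{P}^{\frac12}_\mathcal{E}(\mathcal{M}_\mathcal{S}f)\quad\text{pointwise}.$$
   Context: $\langle f\rangle_R=\frac1{\mu(R)}\int_Rf\,d\mu$. For a family $\mathcal{F}$ of such sets, $\mathcal{M}_\mathcal{F}f=\sup_{R\in\mathcal{F}}|\langle f\rangle_R|\mathbf{1}_R$. $\mathsf{P}^r_R(g):=\inf\{\lambda\in\mathbb{R}:\mu(\{x\in R:g(x)>\lambda\})\le r\mu(R)\}$ and $\mathcal{P}^r_\mathcal{E}g:=\sup_{R\in\mathcal{E}}\mathsf{P}^r_R(g)\mathbf{1}_R$. A subfamily $\mathcal{S}$ is sparse if there exist pairwise disjoint sets $E_R\subseteq R$, $R\in\mathcal{S}$, with $\mu(E_R)\ge\frac12\mu(R)$. *)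

From HB Require Import structures.
From mathcomp Require Import all_boot all_order all_algebra.
From mathcomp Require Import all_classical all_reals all_analysis.
Set Implicit Arguments. Unset Strict Implicit. Unset Printing Implicit Defensive.
Import Order.TTheory GRing.Theory Num.Theory.
Local Open Scope classical_set_scope.
Local Open Scope ring_scope.

Section Defs.
Context (d : measure_display) (T : measurableType d) (R : realType)
        (mu : {measure set T -> \bar R}).

Definition avg (Q : set T) (f : T -> R) : R :=
  (fine (mu Q))^-1 * fine (\int[mu]_(x in Q) (f x)%:E).

Definition maxop (F : set (set T)) (f : T -> R) (x : T) : \bar R :=
  ereal_sup [set (`|avg Q f| * \1_Q x)%:E | Q in F].

Definition Pquant (r : R) (Q : set T) (g : T -> \bar R) : \bar R :=
  ereal_inf [set lam%:E | lam in
    [set lam : R | (mu [set x | Q x /\ (lam%:E < g x)%E] <= r%:E * mu Q)%E]].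

Definition Pop (r : R) (E : set (set T)) (g : T -> \bar R) (x : T) : \bar R :=
  ereal_sup [set (Pquant r Q g * (\1_Q x)%:E)%E | Q in E].

Definition sparse (S : set (set T)) : Prop :=
  exists EQ : set T -> set T,
    (forall Q, S Q -> [/\ measurable (EQ Q), EQ Q `<=` Q &
                        ((2^-1)%:E * mu Q <= mu (EQ Q))%E]) /\
    (forall Q1 Q2, S Q1 -> S Q2 -> Q1 <> Q2 -> EQ Q1 `&` EQ Q2 = set0).

End Defs.

From HB Require Import structures.
From mathcomp Require Import all_boot all_order all_algebra.
From mathcomp Require Import all_classical all_reals all_analysis.
From mathcomp Require Import measurable_realfun lra.
Import Order.TTheory GRing.Theory Num.Theory.
Local Open Scope classical_set_scope.
Local Open Scope ring_scope.

(* Run through E by decreasing |<f>_Q|: Q joins S, with E_Q the part of Q not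
   yet covered by the members already chosen, unless more than half of Q is
   already covered.  Either way more than half of every Q in E lies in members
   P of S with |<f>_P| >= |<f>_Q|, so M_S f > lambda on more than half of Q
   for every lambda < |<f>_Q|, i.e. P^{1/2}_Q(M_S f) >= |<f>_Q|. *)

Section Selection.
Context {d : measure_display} {T : measurableType d} {R : realType}
        (mu : {measure set T -> \bar R}).

Definition pos_fin_measurable (Q : set T) :=
  [/\ measurable Q, (0 < mu Q)%E & (mu Q < +oo)%E].

Definition cover_ge (a : set T -> R) (S : set (set T)) (c : R) : set T :=
  \bigcup_(P in [set P | S P /\ c <= a P]) P.

Lemma measurable_cover_ge a S c : finite_set S ->
  (forall P, S P -> measurable P) -> measurable (cover_ge a S c).
Proof.
move=> finS mS; apply: fin_bigcup_measurable; last by move=> P [/mS].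
by apply: sub_finite_set finS => P [].
Qed.

Lemma cover_geS a S S' c : S `<=` S' -> cover_ge a S c `<=` cover_ge a S' c.
Proof. by move=> SS' x [P [SP cP] Px]; exists P => //; split => //; apply: SS'. Qed.

Lemma sparse0 : sparse mu set0.
Proof. by exists id. Qed.

Lemma sparse_setU1 S R0 :
  sparse mu S -> measurable (R0 `\` \bigcup_(P in S) P) ->
  ((2^-1)%:E * mu R0 <= mu (R0 `\` \bigcup_(P in S) P))%E ->
  sparse mu (S `|` [set R0]).
Proof.
move=> [EQ [EQS EQdisj]] mR0S halfR0S.
have [SR0|nSR0] := pselect (S R0).
  by rewrite setUidl; [exists EQ | move=> _ ->].
pose EQ' Q := if Q == R0 then R0 `\` \bigcup_(P in S) P else EQ Q.
have EQ'S Q : S Q -> EQ' Q = EQ Q.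
  by move=> SQ; rewrite /EQ'; case: eqP => // QR0; move: SQ; rewrite QR0.
have EQ'R0 : EQ' R0 = R0 `\` \bigcup_(P in S) P by rewrite /EQ' eqxx.
have EQ'disj Q : S Q -> EQ' Q `&` EQ' R0 = set0.
  move=> SQ; rewrite EQ'S // EQ'R0; apply/seteqP; split => // x [EQx [_]].
  by apply; exists Q => //; have [_ + _] := EQS Q SQ; apply.
exists EQ'; split.
  move=> Q [SQ|->]; last by rewrite EQ'R0; split => // x [].
  by rewrite EQ'S //; exact: EQS.
move=> Q1 Q2 [S1|->] [S2|->] Q12 //.
- by rewrite !EQ'S //; exact: EQdisj.
- exact: EQ'disj.
- by rewrite setIC; exact: EQ'disj.
Qed.

Lemma half_lt_measure Q : pos_fin_measurable Q -> ((2^-1)%:E * mu Q < mu Q)%E.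
Proof.
move=> [_ Q0 Qoo]; have Qfin : mu Q \is a fin_num by rewrite ge0_fin_numE ?ltW.
move: Q0; rewrite -(fineK Qfin) -EFinM !lte_fin => Q0; lra.
Qed.

Lemma half_le_measureD A B : measurable A -> measurable B -> (mu A < +oo)%E ->
  (mu (A `&` B) <= (2^-1)%:E * mu A)%E -> ((2^-1)%:E * mu A <= mu (A `\` B))%E.
Proof.
move=> mA mB Aoo; rewrite measureD //.
have Afin : mu A \is a fin_num by rewrite ge0_fin_numE.
have ABfin : mu (A `&` B) \is a fin_num.
  rewrite ge0_fin_numE // (le_lt_trans _ Aoo) //.
  by apply: le_measure; rewrite ?inE //; exact: measurableI.
have -> : (mu A - mu (A `&` B) = (fine (mu A) - fine (mu (A `&` B)))%:E)%E.
  by rewrite EFinB !fineK.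
rewrite -(fineK Afin) -(fineK ABfin) -EFinM !lee_fin => AB; lra.
Qed.

Variable a : set T -> R.

Lemma sparse_select_sorted (s : seq (set T)) :
  sorted (fun P Q => a P <= a Q) s ->
  (forall Q, Q \in s -> pos_fin_measurable Q) ->
  exists S, [/\ S `<=` [set` s], sparse mu S &
    forall Q, Q \in s -> ((2^-1)%:E * mu Q < mu (Q `&` cover_ge a S (a Q)))%E].
Proof.
elim: s => [_ _|R0 s IH /= pathR0 adm].
  by exists set0; split => //; exact: sparse0.
have R0min : forall Q, Q \in s -> a R0 <= a Q.
  by apply/allP; apply: order_path_min pathR0 => ? ? ?; exact: le_trans.
have adm_s Q : Q \in s -> pos_fin_measurable Q.
  by move=> Qs; apply: adm; rewrite inE Qs orbT.
have [S' [S's spS' halfS']] := IH (path_sorted pathR0) adm_s.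
have [mR0 _ R0oo] := adm R0 (mem_head _ _).
have finS' : finite_set S' := sub_finite_set S's (finite_seq s).
have mS' P : S' P -> measurable P by move=> /S's /adm_s [].
set U := \bigcup_(P in S') P.
have mU : measurable U := fin_bigcup_measurable finS' mS'.
have [halfU|Uhalf] := ltP ((2^-1)%:E * mu R0)%E (mu (R0 `&` U)).
- (* R0 is more than half covered by S', whose members all have larger a *)
  exists S'; split => //; first by move=> Q /S's Qs; rewrite /= inE Qs orbT.
  move=> Q; rewrite inE => /orP[/eqP->|/halfS'//].
  apply: (lt_le_trans halfU); apply: le_measure; rewrite ?inE.
  + exact: measurableI.
  + by apply: measurableI => //; exact: measurable_cover_ge.
  apply: setIS => x [P SP Px]; exists P => //; split => //.
  by apply: R0min; exact: S's.
- exists (S' `|` [set R0]); split.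
  + by move=> Q [/S's Qs|->] /=; rewrite inE ?Qs ?orbT ?eqxx.
  + apply: sparse_setU1 => //; first exact: measurableD.
    exact: half_le_measureD.
  move=> Q; rewrite inE => /orP[/eqP->|Qs].
    rewrite setIidl; first exact/half_lt_measure/adm/mem_head.
    by move=> x R0x; exists R0 => //; split => //; right.
  apply: (lt_le_trans (halfS' Q Qs)); have [mQ _ _] := adm_s Q Qs.
  apply: le_measure; rewrite ?inE.
  + by apply: measurableI => //; exact: measurable_cover_ge.
  + apply: measurableI => //; apply: measurable_cover_ge.
      by rewrite finite_setU; split; [exact: finS' | exact: finite_set1].
    by move=> P [/mS'|->].
  by apply: setIS; apply: cover_geS; exact: subsetUl.
Qed.

Lemma sparse_selection (E : set (set T)) : finite_set E ->
  (forall Q, E Q -> pos_fin_measurable Q) ->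
  exists S, [/\ S `<=` E, sparse mu S &
    forall Q, E Q -> ((2^-1)%:E * mu Q < mu (Q `&` cover_ge a S (a Q)))%E].
Proof.
move=> /finite_seqP[s ->] adm; pose leA P Q := a P <= a Q.
have [|S [Ss spS halfS]] :=
  sparse_select_sorted _ (sort_sorted (fun P Q => le_total (a P) (a Q)) s).
  by move=> Q; rewrite mem_sort; exact: adm.
exists S; split => [Q /Ss /=||Q Qs]; rewrite ?(mem_sort leA) //.
by apply: halfS; rewrite mem_sort.
Qed.

Lemma le_Pquant A (r c : R) Q (g : T -> \bar R) :
  measurable A -> A `<=` Q -> (r%:E * mu Q < mu A)%E ->
  (forall lam, measurable [set x | Q x /\ (lam%:E < g x)%E]) ->
  (forall lam, lam < c -> A `<=` [set x | (lam%:E < g x)%E]) ->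
  (c%:E <= Pquant mu r Q g)%E.
Proof.
move=> mA AQ rA mg Ag; apply: le_ereal_inf_tmp => _ [lam glam <-].
rewrite lee_fin leNgt; apply/negP => lamc.
have muA : (mu A <= mu [set x | Q x /\ (lam%:E < g x)%E])%E.
  by apply: le_measure; rewrite ?inE // => x Ax; split; [exact: AQ | exact: Ag].
by have := lt_le_trans rA (le_trans muA glam); rewrite ltxx.
Qed.

End Selection.

Section MaximalOperator.
Context {d : measure_display} {T : measurableType d} {R : realType}
        (mu : {measure set T -> \bar R}) (f : T -> R).

Lemma measurable_maxop_gt S (lam : R) : finite_set S ->
  (forall P, S P -> measurable P) ->
  measurable [set x | (lam%:E < maxop mu S f x)%E].
Proof.
move=> finS mS.
have -> : [set x | (lam%:E < maxop mu S f x)%E] =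
    \bigcup_(P in S) [set x | lam < `|avg mu P f| * \1_P x].
  apply/seteqP; split => x /=.
    by move=> /ereal_sup_gt[_ [P SP <-]]; rewrite lte_fin; exists P.
  move=> [P SP lamP]; apply: (lt_le_trans _ (ereal_sup_ubound _)).
    exact: (lamP : (lam%:E < _%:E)%E).
  by exists P.
apply: fin_bigcup_measurable => // P SP.
rewrite -preimage_itvoy -[X in measurable X]setTI.
exact: (measurable_funM (measurable_cst _) (measurable_indic (mS P SP)))
  measurableT _ (measurable_itv _).
Qed.

Lemma cover_ge_sub_maxop_gt S (c lam : R) : lam < c ->
  cover_ge (fun P => `|avg mu P f|) S c `<=`
  [set x | (lam%:E < maxop mu S f x)%E].
Proof.
move=> lamc x [P [SP cP] Px] /=.
apply: (lt_le_trans _ (ereal_sup_ubound _)); last by exists P.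
by rewrite indicE mem_set // mulr1 lte_fin (lt_le_trans lamc cP).
Qed.

Lemma maxop_le_Pop E (r : R) (g : T -> \bar R) x :
  (forall Q, E Q -> (`|avg mu Q f|%:E <= Pquant mu r Q g)%E) ->
  (maxop mu E f x <= Pop mu r E g x)%E.
Proof.
move=> avgQ; apply: ge_ereal_sup => _ [Q EQ <-].
apply: (le_trans _ (ereal_sup_ubound _)); last by exists Q.
rewrite indicE; have [Qx|nQx] := pselect (Q x).
  by rewrite mem_set // mulr1 mule1; exact: avgQ.
by rewrite memNset // mulr0 mule0.
Qed.

End MaximalOperator.

Theorem theorem1p5 (d : measure_display) (T : measurableType d) (R : realType)
  (mu : {measure set T -> \bar R}) (E : set (set T)) :
  finite_set E ->
  (forall Q, E Q -> [/\ measurable Q, (0 < mu Q)%E & (mu Q < +oo)%E]) ->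
  forall f : T -> R, mu.-integrable setT (EFin \o f) ->
  exists S : set (set T), S `<=` E /\ sparse mu S /\
    forall x : T, (maxop mu E f x <= Pop mu (2^-1) E (maxop mu S f) x)%E.
Proof.
move=> finE admE f _.
pose a P := `|avg mu P f|.
have [S [SE spS halfS]] := sparse_selection mu a _ finE admE.
have finS : finite_set S := sub_finite_set SE finE.
have mS P : S P -> measurable P by move=> /SE /admE [].
exists S; split => //; split => // x.
apply: maxop_le_Pop => Q EQ; have [mQ _ _] := admE Q EQ.
apply: (le_Pquant mu (Q `&` cover_ge a S (a Q))) => //.
- by apply: measurableI => //; exact: measurable_cover_ge.
- exact: halfS.
- by move=> lam; apply: measurableI => //; exact: measurable_maxop_gt.
- by move=> lam lamc y [_]; exact: cover_ge_sub_maxop_gt.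
Qed.
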